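(* Let $g>\tfrac12$, let $M_{\mathrm{I}},M_{\mathrm{II}}\in\mathbb{Z}_{\ge0}$, $M=M_{\mathrm{I}}+M_{\mathrm{II}}$, let $\mathcal{D}=((d_1,t_1),\ldots,(d_M,t_M))$ be an ordered list of pairwise distinct seed labels as described in the context, containing exactly $M_{\mathrm{I}}$ labels of Type I and $M_{\mathrm{II}}$ labels of Type II, and let $n\in\mathbb{Z}_{\ge0}$. For $N\in\{M,M+1\}$, $j=1,\ldots,N$ and $\eta>0$ define $$X^{(N)}_{(\mathrm{v},\mathrm{I}),j}(\eta)=L^{(g+j-\frac32)}_{\mathrm{v}}(-\eta),\qquad X^{(N)}_{(\mathrm{v},\mathrm{II}),j}(\eta)=(-1)^{j-1}\big(g-\tfrac12-\mathrm{v}\big)_{j-1}\,\eta^{N-j}L^{(\frac32-g-j)}_{\mathrm{v}}(\eta),$$ $$Z^{(N)}_{n,j}(\eta)=(-1)^{j-1}L^{(g+j-\frac32)}_{n+1-j}(\eta),$$ and let $\vec X^{(N)}_{(\mathrm{v},t)}$, $\vec Z^{(N)}_n$ denote the column vectors $(X^{(N)}_{(\mathrm{v},t),j})_{j=1}^N$, $(Z^{(N)}_{n,j})_{j=1}^N$. Then for $\eta>0$, $$\Xi_{\mathcal{D}}(\eta)=\eta^{-M_{\mathrm{II}}(M_{\mathrm{II}}-1)}\det\big(\vec X^{(M)}_{(d_1,t_1)}(\eta)\ \cdots\ \vec X^{(M)}_{(d_M,t_M)}(\eta)\big),$$ $$P_{\mathcal{D},n}(\eta)=\eta^{-M_{\mathrm{II}}(M_{\mathrm{II}}-1)}\det\big(\vec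 X^{(M+1)}_{(d_1,t_1)}(\eta)\ \cdots\ \vec X^{(M+1)}_{(d_M,t_M)}(\eta)\ \vec Z^{(M+1)}_n(\eta)\big).$$
   Context: $(a)_k=a(a+1)\cdots(a+k-1)$, $(a)_0=1$. For real $\alpha$ and $m\in\mathbb{Z}_{\ge0}$ the Laguerre polynomial is $L^{(\alpha)}_m(\eta)=\frac{1}{m!}\sum_{k=0}^m\frac{(-m)_k}{k!}(\alpha+k+1)_{m-k}\eta^k$, and $L^{(\alpha)}_m\equiv0$ for $m<0$. For $a\in\mathbb{R}$, $[a]'$ denotes the greatest integer strictly less than $a$. Fix $g>\frac12$. A seed label is a pair $(\mathrm{v},t)$ with $t\in\{\mathrm{I},\mathrm{II}\}$, where $\mathrm{v}\in\mathbb{Z}_{\ge0}$ if $t=\mathrm{I}$ and $\mathrm{v}\in\{0,1,\ldots,[g-\frac12]'\}$ if $t=\mathrm{II}$. Define, for $\eta>0$, $\mu_{(\mathrm{v},\mathrm{I})}(\eta)=e^{\eta}L^{(g-\frac12)}_{\mathrm{v}}(-\eta)$, $\mu_{(\mathrm{v},\mathrm{II})}(\eta)=\eta^{\frac12-g}L^{(\frac12-g)}_{\mathrm{v}}(\eta)$, and $P_n(\eta)=L^{(g-\frac12)}_n(\eta)$. The Wronskian with respect to $\eta$ is $\mathrm{W}[f_1,\ldots,f_m](\eta)=\det\big(\frac{d^{j-1}f_k}{d\eta^{j-1}}\big)_{1\le j,k\le m}$. For an ordered list $\mathcal{D}=((d_1,t_1),\ldots,(d_M,t_M))$ of seed labels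 with $M_{\mathrm{I}}$ of Type I and $M_{\mathrm{II}}$ of Type II, the denominator polynomial and the multi-indexed Laguerre polynomials are defined by $\Xi_{\mathcal{D}}(\eta)=\mathrm{W}[\mu_{(d_1,t_1)},\ldots,\mu_{(d_M,t_M)}](\eta)\,\eta^{(M_{\mathrm{I}}+g-\frac12)M_{\mathrm{II}}}e^{-M_{\mathrm{I}}\eta}$ and $P_{\mathcal{D},n}(\eta)=\mathrm{W}[\mu_{(d_1,t_1)},\ldots,\mu_{(d_M,t_M)},P_n](\eta)\,\eta^{(M_{\mathrm{I}}+g+\frac12)M_{\mathrm{II}}}e^{-M_{\mathrm{I}}\eta}$, $n\in\mathbb{Z}_{\ge0}$. *)

From HB Require Import structures.
From mathcomp Require Import all_boot all_order all_algebra.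
From mathcomp Require Import all_classical all_reals all_analysis.
Set Implicit Arguments. Unset Strict Implicit. Unset Printing Implicit Defensive.
Import Order.TTheory GRing.Theory Num.Theory.
Local Open Scope ring_scope.

Section Defs.
Variable R : realType.

Definition poch (a : R) (k : nat) : R := \prod_(i < k) (a + i%:R).

(* Laguerre polynomial L^(alpha)_m(x); identically zero for m < 0 *)
Definition laguerre (alpha : R) (m : int) (x : R) : R :=
  match m with
  | Posz m => (m`!%:R)^-1 *
      \sum_(k < m.+1) (poch (- m%:R) k / (k`!%:R)) * poch (alpha + k%:R + 1) (m - k) * x ^+ k
  | Negz _ => 0
  end.

(* [a]' : greatest integer strictly less than a *)
Definition brk' (a : R) : int := (Num.ceil a - 1)%R.

End Defs.

Inductive seedType := TI | TII.
Definition seedType_eqb (s t : seedType) : bool :=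
  match s, t with TI, TI | TII, TII => true | _, _ => false end.
Lemma seedType_eqP : Equality.axiom seedType_eqb.
Proof. by case; case; constructor. Qed.
HB.instance Definition _ := hasDecEq.Build seedType seedType_eqP.

Definition label := (nat * seedType)%type.

Section Defs2.
Variable R : realType.
Local Open Scope ring_scope.

Definition isTypeI (l : label) : bool := l.2 == TI.
Definition isTypeII (l : label) : bool := l.2 == TII.

Definition valid_label (g : R) (l : label) : Prop :=
  match l.2 with
  | TI => True
  | TII => (l.1%:Z <= brk' (g - 2^-1))%R
  end.

Definition mu (g : R) (l : label) : R -> R :=
  match l.2 with
  | TI => fun eta => expR eta * laguerre (g - 2^-1) l.1 (- eta)
  | TII => fun eta => eta `^ (2^-1 - g) * laguerre (2^-1 - g) l.1 eta
  end.

Definition Pfun (g : R) (n : nat) : R -> R := fun eta => laguerre (g - 2^-1) n eta.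

Definition wronskian (fs : seq (R -> R)) (eta : R) : R :=
  \det (\matrix_(j < size fs, k < size fs) (derive1n j (nth (fun _ => 0) fs k)) eta).

Definition MI (D : seq label) : nat := count isTypeI D.
Definition MII (D : seq label) : nat := count isTypeII D.

Definition Xi (g : R) (D : seq label) (eta : R) : R :=
  wronskian (map (mu g) D) eta * eta `^ (((MI D)%:R + g - 2^-1) * (MII D)%:R)
  * expR (- ((MI D)%:R * eta)).

Definition PD (g : R) (D : seq label) (n : nat) (eta : R) : R :=
  wronskian (rcons (map (mu g) D) (Pfun g n)) eta
  * eta `^ (((MI D)%:R + g + 2^-1) * (MII D)%:R)
  * expR (- ((MI D)%:R * eta)).

(* X^{(N)}_{(v,t),j}(eta), j is 1-based *)
Definition Xent (g : R) (N : nat) (l : label) (j : nat) (eta : R) : R :=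
  match l.2 with
  | TI => laguerre (g + j%:R - 3/2) l.1 (- eta)
  | TII => (-1) ^+ (j.-1) * poch (g - 2^-1 - (l.1)%:R) (j.-1) * eta ^+ (N - j)
           * laguerre (3/2 - g - j%:R) l.1 eta
  end.

(* Z^{(N)}_{n,j}(eta), j is 1-based *)
Definition Zent (g : R) (n : nat) (j : nat) (eta : R) : R :=
  (-1) ^+ (j.-1) * laguerre (g + j%:R - 3/2) (n%:Z + 1 - j%:Z) eta.

End Defs2.

(* Each seed function is an elementary weight times a Laguerre polynomial, and
   differentiation preserves this shape while shifting the Laguerre parameter:
     (e^x L^(b)_v(-x))' = e^x L^(b+1)_v(-x),
     (x^b L^(b)_v(x))'  = (b + v) x^(b-1) L^(b-1)_v(x),
     (L^(a)_n)'         = - L^(a+1)_(n-1).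
   Hence the j-th row of the Wronskian is, column by column, the weight e^x
   (Type I) or x^(3/2 - g - N) (Type II) times the entries X and Z.  Pulling the
   weights out of the determinant, they cancel against the gauge factors of
   Xi_D and P_D,n up to x^(-M_II (M_II - 1)). *)

From Pilot Require Import Defs.
From HB Require Import structures.
From mathcomp Require Import all_boot all_order all_algebra.
From mathcomp Require Import all_classical all_reals all_analysis.
From mathcomp Require Import ring.
Set Implicit Arguments. Unset Strict Implicit. Unset Printing Implicit Defensive.
Import Order.TTheory GRing.Theory Num.Theory.
Local Open Scope ring_scope.

Arguments laguerre : simpl never.

Section LaguerrePolynomials.
Variable R : realType.
Implicit Types (a b : R) (k m r v : nat).

Lemma poch0 b : poch b 0 = 1.
Proof. by rewrite /poch big_ord0. Qed.

Lemma pochS b r : poch b r.+1 = b * poch (b + 1) r.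
Proof.
rewrite /poch big_ord_recl /= addr0; congr (_ * _); apply: eq_bigr => i _.
by rewrite /bump /= add1n -nat1r addrA.
Qed.

Lemma pochSr b r : poch b r.+1 = poch b r * (b + r%:R).
Proof. by rewrite /poch big_ord_recr. Qed.

Lemma fact_neq0 r : (r`!%:R : R) != 0.
Proof. by rewrite pnatr_eq0 -lt0n fact_gt0. Qed.

Lemma poch_oppn m k : (k <= m)%N ->
  poch (- m%:R) k = (-1) ^+ k * m`!%:R / (m - k)`!%:R :> R.
Proof.
elim: k => [|k IHk] lt_km; first by rewrite poch0 subn0 expr0 mul1r divff ?fact_neq0.
have le_km := ltnW lt_km.
rewrite pochSr IHk // -subnSK // factS natrM subnSK // natrB //.
have mk_neq0 : (m%:R - k%:R : R) != 0 by rewrite -natrB // pnatr_eq0 subn_eq0 -ltnNge.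
by rewrite exprS; field; rewrite fact_neq0 mk_neq0.
Qed.

(* The multiset coefficient binom(b + r - 1, r). *)
Definition multichoose b r : R := poch b r / r`!%:R.

Lemma multichoose0 b : multichoose b 0 = 1.
Proof. by rewrite /multichoose poch0 fact0 divr1. Qed.

Lemma multichooseS b r :
  multichoose b r.+1 + multichoose (b + 1) r = multichoose (b + 1) r.+1.
Proof.
rewrite /multichoose pochS pochSr factS natrM.
by field; rewrite fact_neq0 nat1r pnatr_eq0.
Qed.

Lemma multichoose_shift b r :
  b * multichoose (b + 1) r = (b + r%:R) * multichoose b r.
Proof. by rewrite /multichoose !mulrA -pochS pochSr; ring. Qed.

Definition laguerre_coef a m k : R :=
  (-1) ^+ k / k`!%:R * multichoose (a + k%:R + 1) (m - k).

Definition laguerrep a m : {poly R} := \poly_(k < m.+1) laguerre_coef a m k.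

Definition laguerrepz a (m : int) : {poly R} :=
  if m is Posz m then laguerrep a m else 0.

Lemma laguerreE a (m : int) x : laguerre a m x = (laguerrepz a m).[x].
Proof.
case: m => [m|m]; last by rewrite /laguerre horner0.
rewrite /laguerre /= horner_poly mulr_sumr; apply: eq_bigr => k _.
have le_km : (k <= m)%N by rewrite -ltnS.
rewrite poch_oppn // /laguerre_coef /multichoose.
by field; rewrite !fact_neq0.
Qed.

Lemma deriv_laguerrep a m :
  (laguerrep a m)^`() = - laguerrepz (a + 1) (m%:Z - 1).
Proof.
case: m => [|m].
  by apply/polyP => k; rewrite coef_deriv coef_poly coefN coef0 oppr0 mul0rn.
rewrite -addn1 PoszD addrK; apply/polyP => k.
rewrite coef_deriv coefN !coef_poly addn1 ltnS.
case: ifP => _; last by rewrite mul0rn oppr0.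
rewrite /laguerre_coef subSS -[_ *+ k.+1]mulr_natr exprS factS natrM.
have -> : a + k.+1%:R + 1 = a + 1 + k%:R + 1 by rewrite -natr1; ring.
by field; rewrite fact_neq0 nat1r pnatr_eq0.
Qed.

Lemma deriv_laguerrepz a (m : int) :
  (laguerrepz a m)^`() = - laguerrepz (a + 1) (m - 1).
Proof. by case: m => m; [exact: deriv_laguerrep | rewrite deriv0 oppr0]. Qed.

Lemma laguerrep_subr_deriv a m :
  laguerrep a m - (laguerrep a m)^`() = laguerrep (a + 1) m.
Proof.
rewrite deriv_laguerrep opprK; case: m => [|m].
  by apply/polyP => -[|k]; rewrite addr0 !coef_poly //= /laguerre_coef !multichoose0.
rewrite -addn1 PoszD addrK addn1; apply/polyP => k.
rewrite coefD !coef_poly; case: (ltngtP k m.+1) => [lt_km|lt_mk|->].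
- rewrite ltnW // /laguerre_coef subSn // -mulrDr.
  have -> : a + 1 + k%:R + 1 = a + k%:R + 1 + 1 by ring.
  by rewrite multichooseS.
- by rewrite ltnNge lt_mk addr0.
- by rewrite ltnS leqnn addr0 /laguerre_coef subnn !multichoose0.
Qed.

Lemma laguerrep_lower_param a m :
  a *: laguerrep a m + 'X * (laguerrep a m)^`() = (a + m%:R) *: laguerrep (a - 1) m.
Proof.
have coef_lower k : (k <= m)%N ->
    laguerre_coef a m k * (a + k%:R) = (a + m%:R) * laguerre_coef (a - 1) m k.
  move=> le_km; have shift := multichoose_shift (a + k%:R) (m - k).
  rewrite -[_ + (m - k)%:R]addrA -natrD subnKC // in shift.
  rewrite /laguerre_coef (_ : a - 1 + k%:R + 1 = a + k%:R); last by ring.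
  transitivity ((-1) ^+ k / k`!%:R * ((a + k%:R) * multichoose (a + k%:R + 1) (m - k))).
    by ring.
  by rewrite shift; ring.
apply/polyP => -[|k]; rewrite coefD !coefZ coefXM /=.
  by rewrite !coef_poly /= -coef_lower //; ring.
rewrite coef_deriv !coef_poly !ltnS; case: ifP => le_km; last by rewrite mul0rn !mulr0 addr0.
by rewrite -[_ *+ k.+1]mulr_natr -coef_lower // -natr1; ring.
Qed.

End LaguerrePolynomials.

Section SeedDerivatives.
Variable R : realType.
Implicit Types (b c g x : R) (j k n v N : nat).

Lemma derive1n_recurrence (f : R -> R) (F : nat -> R -> R) :
  (forall x, 0 < x -> f x = F 0%N x) ->
  (forall j x, 0 < x -> derive1 (F j) x = F j.+1 x) ->
  forall j x, 0 < x -> derive1n j f x = F j x.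
Proof.
move=> f_F0 dF; elim => [|j IHj] x x_gt0; first exact: f_F0.
rewrite derive1nS derive1E (@near_eq_derive _ _ _ _ (F j)).
  by rewrite -derive1E dF.
near=> y; apply: IHj; near: y; exact: lt_nbhsr.
Unshelve. all: by end_near.
Qed.

Lemma derive1_expR_laguerrep b v x :
  derive1 (fun y => expR y * (laguerrep b v).[- y]) x
  = expR x * (laguerrep (b + 1) v).[- x].
Proof.
have -> : (fun y => expR y * (laguerrep b v).[- y])
          = (expR : R -> R) * horner (laguerrep b v \Po - 'X).
  by apply/funext => y; rewrite fctE horner_comp hornerN hornerX.
rewrite derive1E deriveM; [|exact: derivable_expR|exact: derivable_horner].
rewrite !derive_val deriv_comp derivN derivX -laguerrep_subr_deriv.
by rewrite !horner_comp !hornerE /= horner_comp hornerN hornerX /GRing.scale /=; ring.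
Qed.

Lemma derive1_powR_laguerrep c b v x : 0 < x ->
  derive1 (fun y => c * (y `^ b * (laguerrep b v).[y])) x
  = c * (b + v%:R) * (x `^ (b - 1) * (laguerrep (b - 1) v).[x]).
Proof.
move=> x_gt0.
have -> : (fun y => c * (y `^ b * (laguerrep b v).[y]))
          = c \*: ((@powR R ^~ b) * horner (laguerrep b v)).
  by apply/funext => y; rewrite !fctE.
have dF : is_derive x 1 ((@powR R ^~ b) * horner (laguerrep b v))
    (x `^ b *: (laguerrep b v)^`().[x] + (laguerrep b v).[x] *: (b * x `^ (b - 1))).
  by apply: is_deriveM; exact: is_derive1_powR.
rewrite derive1E; have [_ ->] := is_deriveZ c dF.
have := congr1 (horner^~ x) (laguerrep_lower_param b v).
rewrite !hornerE /= => lower.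
have powS : x `^ (b - 1) * x = x `^ b.
  by rewrite -{2}(powRr1 (ltW x_gt0)) -powRD ?subrK // (gt_eqF x_gt0) implybT.
rewrite /GRing.scale /= -powS.
transitivity (c * x `^ (b - 1) *
  (b * (laguerrep b v).[x] + x * (laguerrep b v)^`().[x])); first by ring.
by rewrite lower; ring.
Qed.

Lemma three_halves_addS g j : g + j.+1%:R - 3 / 2 = g - 2^-1 + j%:R.
Proof. by rewrite -natr1; field. Qed.

Lemma three_halves_subS g j : 3 / 2 - g - j.+1%:R = 2^-1 - g - j%:R.
Proof. by rewrite -natr1; field. Qed.

Lemma derive1n_mu_TI g v N j x : 0 < x ->
  derive1n j (mu g (v, TI)) x = expR x * Xent g N (v, TI) j.+1 x.
Proof.
move=> x_gt0; rewrite (@derive1n_recurrence _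
  (fun j y => expR y * (laguerrep (g - 2^-1 + j%:R) v).[- y])) //.
- by rewrite /Xent /= laguerreE three_halves_addS.
- by move=> y _; rewrite /mu /= laguerreE addr0.
- by move=> k y _; rewrite derive1_expR_laguerrep -addrA natr1.
Qed.

Lemma derive1n_mu_TII g v N j x : (j < N)%N -> 0 < x ->
  derive1n j (mu g (v, TII)) x
  = x `^ (2^-1 - g - N%:R + 1) * Xent g N (v, TII) j.+1 x.
Proof.
move=> lt_jN x_gt0; rewrite (@derive1n_recurrence _
  (fun j y => (-1) ^+ j * poch (g - 2^-1 - v%:R) j *
              (y `^ (2^-1 - g - j%:R) * (laguerrep (2^-1 - g - j%:R) v).[y]))) //.
- have pow_split : x `^ (2^-1 - g - j%:R)
      = x `^ (2^-1 - g - N%:R + 1) * x `^ (N - j.+1)%N%:R.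
    rewrite -powRD; last by rewrite (gt_eqF x_gt0) implybT.
    by rewrite natrB // -natr1; congr (_ `^ _); ring.
  rewrite /Xent /= laguerreE three_halves_subS pow_split powR_mulrn ?(ltW x_gt0) //.
  ring.
- by move=> y _; rewrite /mu /= laguerreE expr0 poch0 !mul1r subr0.
- move=> k y y_gt0; rewrite derive1_powR_laguerrep // exprS pochSr.
  have -> : 2^-1 - g - k%:R - 1 = 2^-1 - g - k.+1%:R by rewrite -natr1; ring.
  ring.
Qed.

(* A bare [Pfun] would denote the partial-function structure of mathcomp-classical. *)
Lemma derive1n_Pfun g n j x : 0 < x -> derive1n j (Defs.Pfun g n) x = Zent g n j.+1 x.
Proof.
move=> x_gt0; rewrite (@derive1n_recurrence _ (fun j =>
  horner ((-1) ^+ j *: laguerrepz (g - 2^-1 + j%:R) (n%:Z - j%:Z)))) //.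
- rewrite /Zent hornerZ laguerreE three_halves_addS.
  by rewrite (_ : n%:Z + 1 - j.+1%:Z = n%:Z - j%:Z)%R // -addn1 PoszD; ring.
- by move=> y _; rewrite /Defs.Pfun expr0 scale1r addr0 subr0 laguerreE.
- move=> k y _; rewrite -derivE derivZ deriv_laguerrepz -addrA natr1.
  rewrite (_ : n%:Z - k%:Z - 1 = n%:Z - k.+1%:Z)%R; last by rewrite -addn1 PoszD; ring.
  by rewrite scalerN -scaleNr exprS mulN1r.
Qed.

Definition seed_weight g N (l : label) x : R :=
  if l.2 is TI then expR x else x `^ (2^-1 - g - N%:R + 1).

Lemma derive1n_mu g l N j x : (j < N)%N -> 0 < x ->
  derive1n j (mu g l) x = seed_weight g N l x * Xent g N l j.+1 x.
Proof. by case: l => v [] lt_jN x_gt0; [exact: derive1n_mu_TI | exact: derive1n_mu_TII]. Qed.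

End SeedDerivatives.

Lemma det_mx_scale_cols (R : comRingType) n (c : 'I_n -> R) (A : 'M[R]_n) :
  \det (\matrix_(i, j) (c j * A i j)) = (\prod_j c j) * \det A.
Proof.
have -> : \matrix_(i, j) (c j * A i j) = A *m diag_mx (\row_j c j).
  by apply/matrixP => i j; rewrite mul_mx_diag !mxE mulrC.
rewrite det_mulmx det_diag mulrC; congr (_ * _).
by apply: eq_bigr => j _; rewrite mxE.
Qed.

Section WronskianFactorization.
Variable R : realType.
Implicit Types (g x : R) (D : seq label).

Lemma wronskian_factor n (fs : seq (R -> R)) (c : nat -> R) (X : nat -> nat -> R) x :
  size fs = n ->
  (forall j k, (j < n)%N -> (k < n)%N -> derive1n j (nth (fun=> 0) fs k) x = c k * X j k) ->
  wronskian fs x = (\prod_(k < n) c k) * \det (\matrix_(j < n, k < n) X j k).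
Proof.
move=> <- dfs; rewrite /wronskian -(det_mx_scale_cols (fun k : 'I_ _ => c k)).
by congr (\det _); apply/matrixP => j k; rewrite !mxE dfs.
Qed.

Lemma wronskian_mu g D x : 0 < x ->
  wronskian (map (mu g) D) x
  = (\prod_(l <- D) seed_weight g (size D) l x) *
    \det (\matrix_(j < size D, k < size D) Xent g (size D) (nth (0%N, TI) D k) j.+1 x).
Proof.
move=> x_gt0.
rewrite (@wronskian_factor (size D) _ (fun k => seed_weight g (size D) (nth (0%N, TI) D k) x)
          (fun j k => Xent g (size D) (nth (0%N, TI) D k) j.+1 x)) ?size_map //.
  by rewrite (big_nth (0%N, TI)) big_mkord.
move=> j k lt_jD lt_kD.
by rewrite (nth_map (0%N, TI)) // (@derive1n_mu _ g _ (size D)).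
Qed.

Lemma wronskian_mu_Pfun g D n x : 0 < x ->
  wronskian (rcons (map (mu g) D) (Defs.Pfun g n)) x
  = (\prod_(l <- D) seed_weight g (size D).+1 l x) *
    \det (\matrix_(j < (size D).+1, k < (size D).+1)
            (if (k < size D)%N then Xent g (size D).+1 (nth (0%N, TI) D k) j.+1 x
             else Zent g n j.+1 x)).
Proof.
move=> x_gt0.
rewrite (@wronskian_factor (size D).+1 _
    (fun k => if (k < size D)%N then seed_weight g (size D).+1 (nth (0%N, TI) D k) x else 1)
    (fun j k => if (k < size D)%N then Xent g (size D).+1 (nth (0%N, TI) D k) j.+1 x
                else Zent g n j.+1 x)) ?size_rcons ?size_map //.
  rewrite big_ord_recr /= ltnn mulr1 (big_nth (0%N, TI)) big_mkord.
  by congr (_ * _); apply: eq_bigr => k _; rewrite ltn_ord.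
move=> j k lt_jD; rewrite ltnS => le_kD.
rewrite nth_rcons size_map; case: ltnP => [lt_kD | ge_kD].
  by rewrite (nth_map (0%N, TI)) // (@derive1n_mu _ g _ (size D).+1).
have -> : k = size D by apply/eqP; rewrite eqn_leq le_kD ge_kD.
by rewrite eqxx derive1n_Pfun // mul1r.
Qed.

Lemma count_TI_TII D : (count isTypeI D + count isTypeII D)%N = size D.
Proof. by rewrite -(count_predC isTypeI); congr (_ + _)%N; apply: eq_count => -[v []]. Qed.

Lemma prod_seed_weight g N D x :
  \prod_(l <- D) seed_weight g N l x
  = expR x ^+ count isTypeI D * (x `^ (2^-1 - g - N%:R + 1)) ^+ count isTypeII D.
Proof.
elim: D => [|[v t] D IHD]; first by rewrite big_nil !expr0 mulr1.
by rewrite big_cons IHD; case: t; rewrite /seed_weight /= ?add0n exprS; ring.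
Qed.

Lemma gauge_cancel x (e e' : R) (mI mII : nat) : 0 < x -> e + e' = 1 - mII%:R ->
  expR x ^+ mI * (x `^ e) ^+ mII * x `^ (e' * mII%:R) * expR (- (mI%:R * x))
  = x ^- (mII * (mII - 1)).
Proof.
move=> x_gt0 ee'.
have mII_sq : ((mII * (mII - 1))%N%:R : R) = mII%:R * (mII%:R - 1).
  by case: (mII) => [|m]; rewrite ?mul0r // subSS subn0 natrM -natr1 addrK.
rewrite -expRM_natl -(powR_mulrn _ (powR_ge0 _ _)) -powRrM.
rewrite -(powR_invn _ (ltW x_gt0)) mII_sq.
transitivity (expR (mI%:R * x) * expR (- (mI%:R * x)) *
              (x `^ (e * mII%:R) * x `^ (e' * mII%:R))); first by ring.
rewrite -expRD addrN expR0 mul1r -powRD; last by rewrite (gt_eqF x_gt0) implybT.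
by rewrite -mulrDl ee'; congr (_ `^ _); ring.
Qed.

End WronskianFactorization.

Unset Implicit Arguments.

Theorem mainTheorem1 (R : realType) (g : R) (mI mII : nat) (D : seq label) (n : nat) :
  2^-1 < g ->
  (forall l, l \in D -> valid_label g l) ->
  uniq D ->
  count isTypeI D = mI ->
  count isTypeII D = mII ->
  forall eta : R, 0 < eta ->
    Xi g D eta =
      eta ^- (mII * (mII - 1)) *
      \det (\matrix_(j < size D, k < size D) Xent g (size D) (nth (0%N, TI) D k) j.+1 eta)
    /\
    PD g D n eta =
      eta ^- (mII * (mII - 1)) *
      \det (\matrix_(j < (size D).+1, k < (size D).+1)
              (if (k < size D)%N then Xent g (size D).+1 (nth (0%N, TI) D k) j.+1 eta
               else Zent g n j.+1 eta)).
Proof.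
move=> _ _ _ countI countII eta eta_gt0.
have sizeD := count_TI_TII D; rewrite countI countII in sizeD.
rewrite /Xi /PD wronskian_mu // wronskian_mu_Pfun // !prod_seed_weight /MI /MII countI countII.
split.
- rewrite -(@gauge_cancel _ eta (2^-1 - g - (size D)%:R + 1) (mI%:R + g - 2^-1) mI mII) //.
    by ring.
  by rewrite -sizeD natrD; ring.
- rewrite -(@gauge_cancel _ eta (2^-1 - g - (size D).+1%:R + 1) (mI%:R + g + 2^-1) mI mII) //.
    by ring.
  by rewrite -sizeD -addn1 !natrD; field.
Qed.
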